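(* Suppose Assumptions 1 and 2 hold and run Algorithm 1 with any $\gamma,\alpha>0$. Then for every $t\in\{1,2,\ldots\}$, $$\|\mathbf{Q}(t)\|\le2\gamma G+\frac{\alpha R^2+2DR+2\gamma^2G^2}{\gamma\epsilon}.$$
   Context: Setting: $n,m$ positive integers; $\mathcal{X}_0\subset\mathbb{R}^n$ is a nonempty compact convex set; $\mathbf{g}=(g_1,\ldots,g_m)^{\mathsf T}:\mathbb{R}^n\to\mathbb{R}^m$ with each $g_k$ convex and continuous; $f^t$, $t=0,1,2,\ldots$, are convex differentiable real functions on (a neighborhood of) $\mathcal{X}_0$. All norms are Euclidean. Assumption 1: there are constants $D,\beta,G,R>0$ with $\|\nabla f^t(\mathbf{x})\|\le D$ for all $\mathbf{x}\in\mathcal{X}_0$ and all $t\ge0$; $\|\mathbf{g}(\mathbf{x})-\mathbf{g}(\mathbf{y})\|\le\beta\|\mathbf{x}-\mathbf{y}\|$ for all $\mathbf{x},\mathbf{y}\in\mathcal{X}_0$; $\|\mathbf{g}(\mathbf{x})\|\le G$ for all $\mathbf{x}\in\mathcal{X}_0$; $\|\mathbf{x}-\mathbf{y}\|\le R$ for all $\mathbf{x},\mathbf{y}\in\mathcal{X}_0$. Assumption 2 (Slater condition): there exist $\epsilon>0$ and $\hat{\mathbf{x}}\in\mathcal{X}_0$ with $g_k(\hat{\mathbf{x}})\le-\epsilon$ for all $k\in\{1,\ldots,m\}$. Algorithm 1 (parameters $\gamma>0,\alpha>0$): let $\tilde{\mathbf{g}}(\mathbf{x})=\gamma\mathbf{g}(\mathbf{x})$.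 Choose any $\mathbf{x}(0)\in\mathcal{X}_0$ and set $Q_k(0)=0$ for all $k$. For each $t=0,1,2,\ldots$: set $Q_k(t+1)=\max\{-\tilde g_k(\mathbf{x}(t)),\,Q_k(t)+\tilde g_k(\mathbf{x}(t))\}$ for $k=1,\ldots,m$, and let $\mathbf{x}(t+1)$ be a minimizer over $\mathbf{x}\in\mathcal{X}_0$ of $[\nabla f^t(\mathbf{x}(t))]^{\mathsf T}(\mathbf{x}-\mathbf{x}(t))+[\mathbf{Q}(t+1)+\tilde{\mathbf{g}}(\mathbf{x}(t))]^{\mathsf T}\tilde{\mathbf{g}}(\mathbf{x})+\alpha\|\mathbf{x}-\mathbf{x}(t)\|^2$, where $\mathbf{Q}(t)=(Q_1(t),\ldots,Q_m(t))^{\mathsf T}$. *)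

(* classical reals.
   Vectors of R^n are encoded as functions nat -> R that vanish at indices >= n
   ("padded" vectors); all norms/inner products only read indices < n. *)
From Stdlib Require Import Reals.
Open Scope R_scope.

Definition vec := nat -> R.

Fixpoint sumn (n : nat) (f : nat -> R) : R :=
  match n with O => 0 | S k => sumn k f + f k end.

Definition dot (n : nat) (x y : vec) : R := sumn n (fun i => x i * y i).
Definition norm (n : nat) (x : vec) : R := sqrt (dot n x x).

Definition vadd (x y : vec) : vec := fun i => x i + y i.
Definition vsub (x y : vec) : vec := fun i => x i - y i.
Definition vscale (a : R) (x : vec) : vec := fun i => a * x i.

Definition padded (n : nat) (x : vec) : Prop := forall i, (n <= i)%nat -> x i = 0.

Definition in_Rn (n : nat) (S : vec -> Prop) : Prop := forall x, S x -> padded n x.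

Definition convex_set (S : vec -> Prop) : Prop :=
  forall x y l, S x -> S y -> 0 <= l <= 1 ->
    S (vadd (vscale l x) (vscale (1 - l) y)).

Definition bounded_Rn (n : nat) (S : vec -> Prop) : Prop :=
  exists B, forall x, S x -> norm n x <= B.

Definition closed_Rn (n : nat) (S : vec -> Prop) : Prop :=
  forall (u : nat -> vec) (y : vec), padded n y -> (forall k, S (u k)) ->
    (forall eps, eps > 0 -> exists N, forall k, (k >= N)%nat -> norm n (vsub (u k) y) < eps) ->
    S y.

Definition compact_Rn (n : nat) (S : vec -> Prop) : Prop :=
  bounded_Rn n S /\ closed_Rn n S.

Definition open_Rn (n : nat) (U : vec -> Prop) : Prop :=
  forall x, U x -> exists r, r > 0 /\
    forall y, padded n y -> norm n (vsub y x) < r -> U y.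

Definition convex_fun_on (S : vec -> Prop) (f : vec -> R) : Prop :=
  forall x y l, S x -> S y -> 0 <= l <= 1 ->
    f (vadd (vscale l x) (vscale (1 - l) y)) <= l * f x + (1 - l) * f y.

Definition continuous_Rn (n : nat) (f : vec -> R) : Prop :=
  forall x, padded n x -> forall eps, eps > 0 -> exists delta, delta > 0 /\
    forall y, padded n y -> norm n (vsub y x) < delta -> Rabs (f y - f x) < eps.

Definition has_gradient (n : nat) (f : vec -> R) (x gx : vec) : Prop :=
  padded n gx /\
  forall eps, eps > 0 -> exists delta, delta > 0 /\
    forall h, padded n h -> norm n h < delta ->
      Rabs (f (vadd x h) - f x - dot n gx h) <= eps * norm n h.

Fixpoint Qseq (m : nat) (gamma : R) (g : vec -> vec) (x : nat -> vec) (t : nat) : vec :=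
  match t with
  | O => fun _ => 0
  | S s => fun k =>
      if Nat.ltb k m then
        Rmax (- (gamma * g (x s) k)) (Qseq m gamma g x s k + gamma * g (x s) k)
      else 0
  end.

Definition alg_obj (n m : nat) (gamma alpha : R) (g : vec -> vec)
  (grad : nat -> vec -> vec) (x : nat -> vec) (t : nat) (y : vec) : R :=
  dot n (grad t (x t)) (vsub y (x t))
  + dot m (vadd (Qseq m gamma g x (S t)) (vscale gamma (g (x t)))) (vscale gamma (g y))
  + alpha * (norm n (vsub y (x t))) ^ 2.

(* Write a = γ g(x(t-1)) and W = Q(t) + a; W is componentwise nonnegative.
   Comparing the objective minimized by x(t+1) at x(t+1) and at the Slater
   point bounds <W, γ g(x(t))> by αR² + 2DR - γε ΣW, and the queue update then
   gives the drift bound ‖Q(t+1)‖² ≤ ‖Q(t)‖² + 2(C - γε ΣW) with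
   C = αR² + 2DR + 2γ²G².  As ‖Q(t)‖ ≤ ΣW + γG, the queue cannot grow once
   ‖Q(t)‖ ≥ γG + C/(γε); since it grows by at most γG per step and starts
   with ‖Q(1)‖ ≤ γG, it never exceeds 2γG + C/(γε). *)
From Stdlib Require Import Reals Lra Lia Psatz.
Open Scope R_scope.

Lemma sumn_ext n f g : (forall i, (i < n)%nat -> f i = g i) -> sumn n f = sumn n g.
Proof.
  induction n as [|n IH]; simpl; intros H; auto.
  rewrite IH by (intros; apply H; lia); rewrite H by lia; reflexivity.
Qed.

Lemma sumn_le n f g : (forall i, (i < n)%nat -> f i <= g i) -> sumn n f <= sumn n g.
Proof.
  induction n as [|n IH]; simpl; intros H; [lra|].
  apply Rplus_le_compat; [apply IH; intros; apply H|apply H]; lia.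
Qed.

Lemma sumn_add n f g : sumn n (fun i => f i + g i) = sumn n f + sumn n g.
Proof. induction n as [|n IH]; simpl; [ring|rewrite IH; ring]. Qed.

Lemma sumn_scal n c f : sumn n (fun i => c * f i) = c * sumn n f.
Proof. induction n as [|n IH]; simpl; [ring|rewrite IH; ring]. Qed.

Lemma sumn_nonneg n f : (forall i, (i < n)%nat -> 0 <= f i) -> 0 <= sumn n f.
Proof.
  induction n as [|n IH]; simpl; intros H; [lra|].
  pose proof (H n ltac:(lia)); pose proof (IH ltac:(intros; apply H; lia)); lra.
Qed.

Lemma sumn_sq_le n f : (forall i, (i < n)%nat -> 0 <= f i) ->
  sumn n (fun i => f i * f i) <= sumn n f * sumn n f.
Proof.
  induction n as [|n IH]; simpl; intros H; [lra|].
  pose proof (H n ltac:(lia)); pose proof (IH ltac:(intros; apply H; lia)).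
  pose proof (sumn_nonneg n f ltac:(intros; apply H; lia)); nra.
Qed.

Lemma dot_nonneg n x : 0 <= dot n x x.
Proof. apply sumn_nonneg; intros; nra. Qed.

Lemma dot_vadd_l n x y z : dot n (vadd x y) z = dot n x z + dot n y z.
Proof. unfold dot, vadd; rewrite <- sumn_add; apply sumn_ext; intros; ring. Qed.

Lemma dot_add_scale n x y t : dot n (vadd x (vscale t y)) (vadd x (vscale t y)) =
  dot n x x + 2 * t * dot n x y + t ^ 2 * dot n y y.
Proof.
  unfold dot, vadd, vscale.
  rewrite (sumn_ext n _ (fun i => (x i * x i + (2 * t) * (x i * y i)) + t ^ 2 * (y i * y i)))
    by (intros; ring).
  rewrite !sumn_add, !sumn_scal; ring.
Qed.

Lemma norm_nonneg n x : 0 <= norm n x.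
Proof. apply sqrt_pos. Qed.

Lemma norm_sq n x : norm n x * norm n x = dot n x x.
Proof. apply sqrt_sqrt, dot_nonneg. Qed.

Lemma norm_ext n x y : (forall i, (i < n)%nat -> x i = y i) -> norm n x = norm n y.
Proof. intros H; unfold norm, dot; f_equal; apply sumn_ext; intros; rewrite H; auto. Qed.

Lemma norm_le_of_dot n x y : dot n x x <= dot n y y -> norm n x <= norm n y.
Proof. intros; apply sqrt_le_1_alt; assumption. Qed.

Lemma norm_zero n : norm n (fun _ => 0) = 0.
Proof.
  unfold norm, dot.
  rewrite (sumn_scal n 0 (fun _ => 0)), Rmult_0_l; apply sqrt_0.
Qed.

Lemma norm_scale n c x : norm n (vscale c x) = Rabs c * norm n x.
Proof.
  unfold norm.
  assert (E : dot n (vscale c x) (vscale c x) = (c * c) * dot n x x).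
  { unfold dot, vscale; rewrite <- sumn_scal; apply sumn_ext; intros; ring. }
  rewrite E, sqrt_mult_alt by nra; f_equal; apply sqrt_Rsqr_abs.
Qed.

Lemma cauchy_schwarz_sq n x y : dot n x y * dot n x y <= dot n x x * dot n y y.
Proof.
  set (A := dot n x x); set (B := dot n y y); set (C := dot n x y).
  assert (Hq : forall t, 0 <= A + 2 * t * C + t ^ 2 * B).
  { intros t; unfold A, B, C; rewrite <- dot_add_scale; apply dot_nonneg. }
  assert (HA : 0 <= A) by apply dot_nonneg; assert (HB : 0 <= B) by apply dot_nonneg.
  destruct (Rlt_dec 0 B) as [Hb|Hb].
  - specialize (Hq (- C / B)).
    replace (A + 2 * (- C / B) * C + (- C / B) ^ 2 * B) with (A - C * C / B) in Hq
      by (field; lra).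
    assert (E : C * C / B * B = C * C) by (field; lra); nra.
  - assert (HB0 : B = 0) by lra.
    destruct (Req_dec C 0) as [Hc|Hc]; [rewrite Hc; nra|].
    specialize (Hq (- (A + 1) / (2 * C))).
    replace (A + 2 * (- (A + 1) / (2 * C)) * C + (- (A + 1) / (2 * C)) ^ 2 * B) with (-1)
      in Hq by (rewrite HB0; field; auto).
    lra.
Qed.

Lemma cauchy_schwarz n x y : Rabs (dot n x y) <= norm n x * norm n y.
Proof.
  unfold norm; rewrite <- sqrt_mult, <- sqrt_Rsqr_abs by apply dot_nonneg.
  apply sqrt_le_1_alt, cauchy_schwarz_sq.
Qed.

Lemma dot_bounded n x y a b :
  norm n x <= a -> norm n y <= b -> - (a * b) <= dot n x y <= a * b.
Proof.
  intros Hx Hy.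
  assert (H : Rabs (dot n x y) <= a * b).
  { eapply Rle_trans; [apply cauchy_schwarz|].
    apply Rmult_le_compat; auto using norm_nonneg. }
  pose proof (Rle_abs (dot n x y)); pose proof (Rle_abs (- dot n x y)) as Hn.
  rewrite Rabs_Ropp in Hn; lra.
Qed.

Lemma norm_triangle n x y : norm n (vadd x y) <= norm n x + norm n y.
Proof.
  rewrite (norm_ext n (vadd x y) (vadd x (vscale 1 y)))
    by (intros; unfold vadd, vscale; ring).
  pose proof (cauchy_schwarz n x y); pose proof (Rle_abs (dot n x y)).
  pose proof (norm_nonneg n x); pose proof (norm_nonneg n y).
  pose proof (norm_nonneg n (vadd x (vscale 1 y))).
  pose proof (norm_sq n x); pose proof (norm_sq n y).
  pose proof (norm_sq n (vadd x (vscale 1 y))) as Hxy.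
  rewrite dot_add_scale in Hxy; nra.
Qed.

Lemma norm_le_sumn n x : (forall i, (i < n)%nat -> 0 <= x i) -> norm n x <= sumn n x.
Proof.
  intros H; unfold norm, dot.
  rewrite <- (sqrt_Rsqr (sumn n x)) by (apply sumn_nonneg; auto).
  apply sqrt_le_1_alt, sumn_sq_le; auto.
Qed.

Lemma queue_update_sq_le_abs q c : 0 <= q ->
  Rmax (- c) (q + c) * Rmax (- c) (q + c) <= (q + Rabs c) * (q + Rabs c).
Proof.
  intros; pose proof (Rle_abs c); pose proof (Rle_abs (- c)) as Hn.
  rewrite Rabs_Ropp in Hn; unfold Rmax; destruct Rle_dec; nra.
Qed.

Lemma queue_update_sq_le_drift q c : 0 <= q ->
  Rmax (- c) (q + c) * Rmax (- c) (q + c) <= q * q + 2 * (q * c) + 2 * (c * c).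
Proof.
  intros; pose proof (Rle_0_sqr (q + c)); unfold Rsqr in *.
  unfold Rmax; destruct Rle_dec; nra.
Qed.

Section QueueUpdate.

Variables (m : nat) (q q' c : vec).
Hypothesis Hq : forall k, (k < m)%nat -> 0 <= q k.
Hypothesis Hq' : forall k, (k < m)%nat -> q' k = Rmax (- c k) (q k + c k).

Lemma queue_update_norm_le : norm m q' <= norm m q + norm m c.
Proof.
  set (v := fun k => Rabs (c k)).
  assert (Hv : norm m v = norm m c).
  { unfold norm, dot; f_equal; apply sumn_ext; intros; unfold v.
    unfold Rabs; destruct Rcase_abs; ring. }
  assert (Hle : norm m q' <= norm m (vadd q v)).
  { apply norm_le_of_dot, sumn_le; intros k Hk.
    rewrite Hq' by auto; apply queue_update_sq_le_abs, Hq; auto. }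
  pose proof (norm_triangle m q v); lra.
Qed.

Lemma queue_update_drift :
  dot m q' q' <= dot m q q + 2 * dot m q c + 2 * dot m c c.
Proof.
  unfold dot; rewrite <- !sumn_scal, <- !sumn_add; apply sumn_le; intros k Hk.
  rewrite Hq' by auto; apply queue_update_sq_le_drift, Hq; auto.
Qed.

End QueueUpdate.

Lemma Qseq_S m gamma g x s k : (k < m)%nat ->
  Qseq m gamma g x (S s) k =
    Rmax (- (gamma * g (x s) k)) (Qseq m gamma g x s k + gamma * g (x s) k).
Proof. intros H; simpl; rewrite (proj2 (Nat.ltb_lt k m) H); reflexivity. Qed.

Lemma Qseq_nonneg m gamma g x t k : 0 <= Qseq m gamma g x t k.
Proof.
  revert k; induction t as [|t IH]; intros k; simpl; [lra|].
  destruct (Nat.ltb k m); [|lra].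
  pose proof (Rmax_l (- (gamma * g (x t) k)) (Qseq m gamma g x t k + gamma * g (x t) k)).
  pose proof (Rmax_r (- (gamma * g (x t) k)) (Qseq m gamma g x t k + gamma * g (x t) k)).
  pose proof (IH k); lra.
Qed.

Lemma le_of_bounded_increments (u : nat -> R) (a b : R) :
  0 <= a -> 0 <= b -> u O <= a ->
  (forall s, u (S s) <= u s + a) ->
  (forall s, a + b <= u s -> u (S s) <= u s) ->
  forall s, u s <= 2 * a + b.
Proof.
  intros Ha Hb H0 Hinc Hdec s; induction s as [|s IH]; [lra|].
  destruct (Rle_dec (a + b) (u s)) as [Hbig|Hsmall].
  - specialize (Hdec s Hbig); lra.
  - specialize (Hinc s); lra.
Qed.

Section AlgorithmOne.

Variables (n m : nat) (X0 : vec -> Prop) (g : vec -> vec) (grad : nat -> vec -> vec).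
Variables (D G Rd eps gamma alpha : R) (x : nat -> vec) (xh : vec).

Hypothesis Hgamma : 0 < gamma.
Hypothesis Heps : 0 < eps.
Hypothesis Halpha : 0 <= alpha.
Hypothesis Hgradb : forall t y, X0 y -> norm n (grad t y) <= D.
Hypothesis HgG : forall y, X0 y -> norm m (g y) <= G.
Hypothesis Hdiam : forall y z, X0 y -> X0 z -> norm n (vsub y z) <= Rd.
Hypothesis Hxh : X0 xh.
Hypothesis Hslater : forall k, (k < m)%nat -> g xh k <= - eps.
Hypothesis Hx0 : X0 (x O).
Hypothesis Hxmin : forall t, X0 (x (S t)) /\
  forall y, X0 y ->
    alg_obj n m gamma alpha g grad x t (x (S t)) <= alg_obj n m gamma alpha g grad x t y.

Let Q := Qseq m gamma g x.
Let W s := vadd (Q (S s)) (vscale gamma (g (x s))).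
Let C := alpha * Rd ^ 2 + 2 * D * Rd + 2 * gamma ^ 2 * G ^ 2.

Lemma iterate_in_X0 s : X0 (x s).
Proof. destruct s; [exact Hx0|exact (proj1 (Hxmin s))]. Qed.

Lemma norm_scaled_constraint_le s : norm m (vscale gamma (g (x s))) <= gamma * G.
Proof.
  rewrite norm_scale, Rabs_pos_eq by lra.
  apply Rmult_le_compat_l; [lra|apply HgG, iterate_in_X0].
Qed.

Lemma norm_Q_one_le : norm m (Q 1) <= gamma * G.
Proof.
  pose proof (norm_scaled_constraint_le O).
  assert (Hstep := queue_update_norm_le m (Q O) (Q 1) (vscale gamma (g (x O)))
    (fun k _ => Qseq_nonneg m gamma g x O k) (fun k Hk => Qseq_S m gamma g x O k Hk)).
  change (Q O) with (fun _ : nat => 0) in Hstep; rewrite norm_zero in Hstep; lra.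
Qed.

Lemma norm_Q_step_le s : norm m (Q (S (S s))) <= norm m (Q (S s)) + gamma * G.
Proof.
  pose proof (norm_scaled_constraint_le (S s)).
  pose proof (queue_update_norm_le m (Q (S s)) (Q (S (S s))) (vscale gamma (g (x (S s))))
    (fun k _ => Qseq_nonneg m gamma g x (S s) k)
    (fun k Hk => Qseq_S m gamma g x (S s) k Hk)).
  lra.
Qed.

Lemma W_nonneg s k : (k < m)%nat -> 0 <= W s k.
Proof.
  intros Hk; unfold W, Q, vadd, vscale; rewrite Qseq_S by auto.
  pose proof (Rmax_l (- (gamma * g (x s) k)) (Qseq m gamma g x s k + gamma * g (x s) k)).
  lra.
Qed.

Lemma norm_Q_le_sumn_W s : norm m (Q (S s)) <= sumn m (W s) + gamma * G.
Proof.
  rewrite (norm_ext m (Q (S s)) (vadd (W s) (vscale (-1) (vscale gamma (g (x s))))))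
    by (intros; unfold W, vadd, vscale; ring).
  eapply Rle_trans; [apply norm_triangle|].
  rewrite norm_scale, (Rabs_left (-1)) by lra.
  pose proof (norm_le_sumn m (W s) (W_nonneg s)).
  pose proof (norm_scaled_constraint_le s); lra.
Qed.

Lemma optimality_vs_slater s :
  dot m (W s) (vscale gamma (g (x (S s)))) + gamma * eps * sumn m (W s)
    <= alpha * Rd ^ 2 + 2 * D * Rd.
Proof.
  destruct (Hxmin s) as [Hxs Hmin]; specialize (Hmin xh Hxh); unfold alg_obj in Hmin.
  change (vadd (Qseq m gamma g x (S s)) (vscale gamma (g (x s)))) with (W s) in Hmin.
  pose proof (iterate_in_X0 s) as Hx.
  assert (Hmove := dot_bounded n _ _ _ _ (Hgradb s _ Hx) (Hdiam _ _ Hxs Hx)).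
  assert (Htest := dot_bounded n _ _ _ _ (Hgradb s _ Hx) (Hdiam _ _ Hxh Hx)).
  assert (Hprox : 0 <= alpha * norm n (vsub (x (S s)) (x s)) ^ 2).
  { pose proof (norm_nonneg n (vsub (x (S s)) (x s))); nra. }
  assert (Hprox_h : alpha * norm n (vsub xh (x s)) ^ 2 <= alpha * Rd ^ 2).
  { pose proof (norm_nonneg n (vsub xh (x s))); pose proof (Hdiam _ _ Hxh Hx).
    apply Rmult_le_compat_l; [lra|apply pow_incr; lra]. }
  assert (Hsl : dot m (W s) (vscale gamma (g xh)) <= - (gamma * eps) * sumn m (W s)).
  { unfold dot; rewrite <- sumn_scal; apply sumn_le; intros k Hk; unfold vscale.
    pose proof (Hslater k Hk); pose proof (W_nonneg s k Hk).
    assert (0 <= W s k * gamma) by nra; nra. }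
  lra.
Qed.

Lemma Q_drift s :
  dot m (Q (S (S s))) (Q (S (S s)))
    <= dot m (Q (S s)) (Q (S s)) + 2 * (C - gamma * eps * sumn m (W s)).
Proof.
  set (a := vscale gamma (g (x s))); set (b := vscale gamma (g (x (S s)))).
  pose proof (queue_update_drift m (Q (S s)) (Q (S (S s))) b
    (fun k _ => Qseq_nonneg m gamma g x (S s) k)
    (fun k Hk => Qseq_S m gamma g x (S s) k Hk)) as Hdrift.
  assert (Hsplit : dot m (Q (S s)) b = dot m (W s) b - dot m a b).
  { unfold W; fold a; rewrite dot_vadd_l; ring. }
  pose proof (dot_bounded m _ _ _ _ (norm_scaled_constraint_le s)
    (norm_scaled_constraint_le (S s))) as Hab.
  pose proof (dot_bounded m _ _ _ _ (norm_scaled_constraint_le (S s))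
    (norm_scaled_constraint_le (S s))) as Hbb.
  pose proof (optimality_vs_slater s) as Hopt; fold a b in Hab, Hbb, Hopt.
  assert (E : gamma * G * (gamma * G) = gamma ^ 2 * G ^ 2) by ring.
  unfold C; lra.
Qed.

Lemma norm_Q_step_nonincreasing s :
  gamma * G + C / (gamma * eps) <= norm m (Q (S s)) ->
  norm m (Q (S (S s))) <= norm m (Q (S s)).
Proof.
  intros Hbig; apply norm_le_of_dot.
  pose proof (norm_Q_le_sumn_W s).
  assert (HC : C <= gamma * eps * sumn m (W s)).
  { assert (E : C = gamma * eps * (C / (gamma * eps))) by (field; lra).
    rewrite E; apply Rmult_le_compat_l; nra. }
  pose proof (Q_drift s); lra.
Qed.

End AlgorithmOne.

Theorem corollary2
  (n m : nat) (Hn : (0 < n)%nat) (Hm : (0 < m)%nat)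
  (X0 : vec -> Prop)
  (HX0Rn : in_Rn n X0) (HX0ne : exists x, X0 x)
  (HX0cvx : convex_set X0) (HX0cpt : compact_Rn n X0)
  (g : vec -> vec)
  (Hgcvx : forall k, (k < m)%nat ->
      convex_fun_on (padded n) (fun x => g x k))
  (Hgcont : forall k, (k < m)%nat -> continuous_Rn n (fun x => g x k))
  (f : nat -> vec -> R) (grad : nat -> vec -> vec)
  (U : vec -> Prop) (HUopen : open_Rn n U) (HUsub : in_Rn n U)
  (HX0U : forall x, X0 x -> U x)
  (Hfcvx : forall t, convex_fun_on X0 (f t))
  (Hgrad : forall t x, U x -> has_gradient n (f t) x (grad t x))
  (D beta G Rd eps : R) (HD : D > 0) (Hbeta : beta > 0) (HG : G > 0) (HRd : Rd > 0)
  (Hgradb : forall t x, X0 x -> norm n (grad t x) <= D)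
  (Hlip : forall x y, X0 x -> X0 y -> norm m (vsub (g x) (g y)) <= beta * norm n (vsub x y))
  (HgG : forall x, X0 x -> norm m (g x) <= G)
  (Hdiam : forall x y, X0 x -> X0 y -> norm n (vsub x y) <= Rd)
  (Heps : eps > 0)
  (Hslater : exists xh, X0 xh /\ forall k, (k < m)%nat -> g xh k <= - eps)
  (gamma alpha : R) (Hgamma : gamma > 0) (Halpha : alpha > 0)
  (x : nat -> vec)
  (Hx0 : X0 (x O))
  (Hxmin : forall t, X0 (x (S t)) /\
      forall y, X0 y ->
        alg_obj n m gamma alpha g grad x t (x (S t)) <= alg_obj n m gamma alpha g grad x t y) :
  forall t, (1 <= t)%nat ->
    norm m (Qseq m gamma g x t) <=
      2 * gamma * G + (alpha * Rd ^ 2 + 2 * D * Rd + 2 * gamma ^ 2 * G ^ 2) / (gamma * eps).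
Proof.
  intros t Ht; destruct t as [|s]; [lia|].
  destruct Hslater as [xh [Hxh Hsl]].
  replace (2 * gamma * G) with (2 * (gamma * G)) by ring.
  apply (le_of_bounded_increments (fun s => norm m (Qseq m gamma g x (S s)))); cbv beta.
  - nra.
  - apply Rlt_le, Rdiv_lt_0_compat; nra.
  - exact (norm_Q_one_le n m X0 g grad G gamma alpha x Hgamma HgG Hx0 Hxmin).
  - exact (norm_Q_step_le n m X0 g grad G gamma alpha x Hgamma HgG Hx0 Hxmin).
  - exact (norm_Q_step_nonincreasing n m X0 g grad D G Rd eps gamma alpha x xh
      Hgamma Heps (Rlt_le _ _ Halpha) Hgradb HgG Hdiam Hxh Hsl Hx0 Hxmin).
Qed.
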